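(* Let $H$ be a finite-dimensional real Hilbert space and let $A = A_1 + A_2$, where $A_1, A_2: H\to H$ are linear operators with $A_1 = A_2^*$, and $A=A^*>0$. Let $\sigma\ge 1/2$, $\tau>0$, and let $y^0,y^1\in H$ be arbitrary and $\varphi^n\in H$. Let $y^{n+1}$, $n\ge1$, be defined by the three-level (multilevel alternating triangle method) scheme $$(E+\sigma\tau A)\frac{y^{n+1}-y^n}{\tau} + \sigma^2\tau^3 A_1A_2\,\frac{y^{n+1}-2y^n+y^{n-1}}{\tau^2} + A y^n = \varphi^n,\quad n=1,2,\dots .$$ Define $$R = \frac{\tau}{2}E + \sigma^2\tau^3 A_1A_2 + \frac{\tau^2}{4}(2\sigma-1)A,$$ $$\mathcal{E}_{n} = \left\|\frac{y^{n}+y^{n-1}}{2}\right\|_A^2 + \left\|\frac{y^{n}-y^{n-1}}{\tau}\right\|_{R}^2 ,\quad n\ge 1.$$ Then $R$ is self-adjoint and positive definite (so $\mathcal{E}_n$ is a squared norm of the pair of consecutive levels), $E+\sigma\tau A$ is self-adjoint positive definite, and for every $n\ge1$, regardless of $\tau$, $$\mathcal{E}_{n+1} \le \mathcal{E}_n + \frac{\tau}{2}\,\|\varphi^n\|^2_{(E+\sigma\tau A)^{-1}} .$$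
   Context: $H$ has scalar product $(\cdot,\cdot)$ and norm $\|y\|=(y,y)^{1/2}$; $A^*$ denotes the adjoint. For a self-adjoint positive definite operator $D$ on $H$, $\|y\|_D = (Dy,y)^{1/2}$; in particular $\|\varphi\|^2_{(E+\sigma\tau A)^{-1}} = ((E+\sigma\tau A)^{-1}\varphi,\varphi)$. $E$ denotes the identity operator on $H$. *)

(* H = 'cV[R]_d (column vectors) with the standard inner product,
   over an arbitrary real field R (every finite-dimensional real Hilbert space
   is isometric to such a space). *)
From HB Require Import structures.
From mathcomp Require Import all_boot all_order all_algebra.
Set Implicit Arguments. Unset Strict Implicit. Unset Printing Implicit Defensive.
Import Order.TTheory GRing.Theory Num.Theory.
Local Open Scope ring_scope.

Definition ip (R : realFieldType) (d : nat) (x y : 'cV[R]_d) : R := (x^T *m y) 0 0.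

Definition sqnormD (R : realFieldType) (d : nat) (D : 'M[R]_d) (y : 'cV[R]_d) : R :=
  ip (D *m y) y.

(* self-adjoint (D^* = D, adjoint = transpose for the standard scalar product)
   and positive definite *)
Definition selfadj_posdef (R : realFieldType) (d : nat) (D : 'M[R]_d) : Prop :=
  D^T = D /\ forall v : 'cV[R]_d, v != 0 -> 0 < ip (D *m v) v.

From HB Require Import structures.
From mathcomp Require Import all_boot all_order all_algebra ring lra.
Import Order.TTheory GRing.Theory Num.Theory.
Local Open Scope ring_scope.

(* The proof follows the classical energy method:
   1. bilinearity/symmetry of ip, and the quadratic-form facts we need:
      a positive definite operator is invertible, and adding a positive
      semidefinite self-adjoint operator keeps it positive definite; this
      shows that R = tau/2 E + sigma^2 tau^3 A1 A2 + tau^2/4 (2 sigma - 1) A and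
      B = E + sigma tau A are self-adjoint positive definite (A1 A2 = A2^T A2
      is a Gram operator, and 2 sigma - 1 >= 0);
   2. the energy identity: for self-adjoint A and C = A1 A2, taking the scalar
      product of the scheme with w = (y^{n+1} - y^{n-1}) / tau gives
        E_{n+1} = E_n + tau (phi, w) - tau/2 (B w, w);
   3. the Young-type bound tau (phi, w) - tau/2 (B w, w) <= tau/2 (B^-1 phi, phi),
      which is the expansion of 0 <= (B (w - B^-1 phi), w - B^-1 phi). *)

Section ScalarProduct.
Set Implicit Arguments. Unset Strict Implicit.
Variables (R : realFieldType) (d : nat).
Implicit Types (x y z : 'cV[R]_d) (M N : 'M[R]_d) (a : R).

Lemma ipDl x y z : ip (x + y) z = ip x z + ip y z.
Proof. by rewrite /ip linearD mulmxDl mxE. Qed.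

Lemma ipDr x y z : ip z (x + y) = ip z x + ip z y.
Proof. by rewrite /ip mulmxDr mxE. Qed.

Lemma ipZl a x y : ip (a *: x) y = a * ip x y.
Proof. by rewrite /ip linearZ /= -scalemxAl mxE. Qed.

Lemma ipZr a x y : ip x (a *: y) = a * ip x y.
Proof. by rewrite /ip -scalemxAr mxE. Qed.

Lemma ipNl x y : ip (- x) y = - ip x y.
Proof. by rewrite -scaleN1r ipZl mulN1r. Qed.

Lemma ipNr x y : ip x (- y) = - ip x y.
Proof. by rewrite -scaleN1r ipZr mulN1r. Qed.

Lemma ipBl x y z : ip (x - y) z = ip x z - ip y z.
Proof. by rewrite ipDl ipNl. Qed.

Lemma ipBr x y z : ip z (x - y) = ip z x - ip z y.
Proof. by rewrite ipDr ipNr. Qed.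

Lemma ip0l y : ip 0 y = 0.
Proof. by rewrite -(scale0r 0) ipZl mul0r. Qed.

Lemma ipC x y : ip x y = ip y x.
Proof. by rewrite /ip -[in LHS](trmxK (x^T *m y)) mxE trmx_mul trmxK. Qed.

Lemma ip_adj M x y : ip (M *m x) y = ip x (M^T *m y).
Proof. by rewrite /ip trmx_mul mulmxA. Qed.

Lemma ip_selfadj {M} x y : M^T = M -> ip (M *m x) y = ip (M *m y) x.
Proof. by move=> hM; rewrite ip_adj hM ipC. Qed.

Lemma ip_ge0 x : 0 <= ip x x.
Proof. by rewrite /ip mxE; apply: sumr_ge0 => i _; rewrite mxE -expr2 sqr_ge0. Qed.

Lemma ip_gt0 x : x != 0 -> 0 < ip x x.
Proof.
move=> hx; rewrite lt_def ip_ge0 andbT; apply: contra hx => /eqP h0.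
apply/eqP/matrixP => i j; rewrite ord1 mxE.
have term_ge0 k : true -> 0 <= x^T 0 k * x k 0 by rewrite mxE -expr2 sqr_ge0.
move: h0; rewrite /ip mxE => /(psumr_eq0P term_ge0)/(_ i isT).
by rewrite mxE -expr2 => /eqP; rewrite sqrf_eq0 => /eqP.
Qed.

Definition posemidef M : Prop := forall v : 'cV[R]_d, 0 <= ip (M *m v) v.

Lemma posdef_semidef {M} : selfadj_posdef M -> posemidef M.
Proof.
move=> [_ hM] v; have [->|hv] := eqVneq v 0; first by rewrite mulmx0 ip0l.
exact/ltW/hM.
Qed.

(* Gram operators N^T N are positive semidefinite: (N^T N v, v) = ||N v||^2. *)
Lemma gram_semidef N : posemidef (N^T *m N).
Proof. by move=> v; rewrite -mulmxA ip_adj trmxK ip_ge0. Qed.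

Lemma semidefZ a M : 0 <= a -> posemidef M -> posemidef (a *: M).
Proof. by move=> ha hM v; rewrite -scalemxAl ipZl mulr_ge0. Qed.

Lemma scalar_posdef a : 0 < a -> selfadj_posdef (a%:M : 'M[R]_d).
Proof.
move=> ha; split; first exact: tr_scalar_mx.
by move=> v hv; rewrite mul_scalar_mx ipZl mulr_gt0 ?ip_gt0.
Qed.

Lemma posdefD M N :
  selfadj_posdef M -> N^T = N -> posemidef N -> selfadj_posdef (M + N).
Proof.
move=> [hMt hM] hNt hN; split; first by rewrite linearD /= hMt hNt.
by move=> v hv; rewrite mulmxDl ipDl ltr_wpDr ?hM.
Qed.

Lemma posdef_unit M : selfadj_posdef M -> M \in unitmx.
Proof.
move=> hM; rewrite -row_free_unit; apply: inj_row_free => v hv.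
have Mv0 : M *m v^T = 0 by rewrite -{1}hM.1 -trmx_mul hv linear0.
apply/eqP; rewrite -trmx_eq0; apply/negPn/negP => hnz.
by have := hM.2 _ hnz; rewrite Mv0 ip0l ltxx.
Qed.

(* Young-type inequality in the norm of M:
   t (f, s) - t/2 ||s||_M^2 <= t/2 ||f||_{M^-1}^2, from 0 <= ||s - M^-1 f||_M^2. *)
Lemma young_posdef M (t : R) (f s : 'cV[R]_d) : selfadj_posdef M -> 0 < t ->
  t * ip f s - t / 2%:R * ip (M *m s) s <= t / 2%:R * ip (invmx M *m f) f.
Proof.
move=> hM ht; set z := invmx M *m f.
have Mz : M *m z = f by rewrite /z mulKVmx //; exact: posdef_unit.
have := posdef_semidef hM (s - z).
rewrite mulmxBr Mz ipBl !ipBr (ip_selfadj s z hM.1) Mz (ipC f z) => hsq.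
have : 0 <= t / 2%:R * (ip (M *m s) s - ip f s - (ip f s - ip z f)).
  by apply: mulr_ge0; [rewrite divr_ge0 ?ltW | lra].
lra.
Qed.

End ScalarProduct.

Section EnergyIdentity.
Variables (R : realFieldType) (d : nat) (A C : 'M[R]_d) (sigma tau : R).
Hypotheses (hAt : A^T = A) (hCt : C^T = C) (htau : tau != 0).

(* The operators of the scheme, with C standing for A1 A2. *)
Definition schemeB : 'M[R]_d := 1%:M + (sigma * tau) *: A.
Definition schemeR : 'M[R]_d := (tau / 2%:R)%:M + (sigma ^+ 2 * tau ^+ 3) *: C
  + (tau ^+ 2 / 4%:R * (2%:R * sigma - 1)) *: A.

Definition energy2 (a b : 'cV[R]_d) : R :=
  sqnormD A (2^-1 *: (a + b)) + sqnormD schemeR (tau^-1 *: (a - b)).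

Definition scheme_lhs (a b c : 'cV[R]_d) : 'cV[R]_d :=
  schemeB *m (tau^-1 *: (a - b))
  + (sigma ^+ 2 * tau ^+ 3) *: C *m ((tau ^+ 2)^-1 *: (a - 2%:R *: b + c))
  + A *m b.

(* Energy identity: the scalar product of the scheme with the central
   difference w = (a - c) / tau. *)
Lemma energy2_step (a b c : 'cV[R]_d) :
  let w := tau^-1 *: (a - c) in
  energy2 a b = energy2 b c + tau * ip (scheme_lhs a b c) w
                - tau / 2%:R * ip (schemeB *m w) w.
Proof.
rewrite /energy2 /scheme_lhs /schemeB /schemeR /sqnormD.
do 4 rewrite ?mulmxDl ?mulmxDr ?mulmxN -?scalemxAl -?scalemxAr ?mul_scalar_mx ?mul1mx.
rewrite !(ipDl, ipDr, ipNl, ipNr, ipZl, ipZr).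
rewrite (ip_selfadj b a hAt) (ip_selfadj c a hAt) (ip_selfadj c b hAt).
rewrite (ip_selfadj b a hCt) (ip_selfadj c a hCt) (ip_selfadj c b hCt).
rewrite (ipC b a) (ipC c a) (ipC c b).
by field; rewrite ?htau ?pnatr_eq0.
Qed.

End EnergyIdentity.

Theorem theorem3 (R : realFieldType) (d : nat)
  (A1 A2 : 'M[R]_d) (sigma tau : R) (y phi : nat -> 'cV[R]_d)
  (hadj : A1 = A2^T)
  (hA : selfadj_posdef (A1 + A2))
  (hsigma : 2^-1 <= sigma) (htau : 0 < tau)
  (hscheme : forall n : nat, (1 <= n)%N ->
     (1%:M + (sigma * tau) *: (A1 + A2)) *m (tau^-1 *: (y n.+1 - y n))
     + (sigma ^+ 2 * tau ^+ 3) *: (A1 *m A2)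
         *m ((tau ^+ 2)^-1 *: (y n.+1 - 2%:R *: y n + y n.-1))
     + (A1 + A2) *m y n = phi n) :
  let A := A1 + A2 in
  let B := 1%:M + (sigma * tau) *: A in
  let Rop := (tau / 2%:R)%:M + (sigma ^+ 2 * tau ^+ 3) *: (A1 *m A2)
             + (tau ^+ 2 / 4%:R * (2%:R * sigma - 1)) *: A in
  let energy := fun n : nat =>
     sqnormD A (2^-1 *: (y n + y n.-1)) + sqnormD Rop (tau^-1 *: (y n - y n.-1)) in
  selfadj_posdef Rop /\ selfadj_posdef B /\
  forall n : nat, (1 <= n)%N ->
    energy n.+1 <= energy n + tau / 2%:R * ip (invmx B *m phi n) (phi n).
Proof.
move=> A B Rop energy.
have hAt : A^T = A := hA.1.
have hC : A1 *m A2 = A2^T *m A2 by rewrite hadj.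
have hCt : (A1 *m A2)^T = A1 *m A2 by rewrite hC trmx_mul trmxK.
have hA0 := posdef_semidef hA.
have h2sigma : 0 <= 2%:R * sigma - 1.
  have two_half : (2%:R * 2^-1 : R) = 1 by rewrite divff // pnatr_eq0.
  lra.
have hRop : selfadj_posdef Rop.
  apply: posdefD; [apply: posdefD | by rewrite linearZ /= hAt |].
  - by apply: scalar_posdef; rewrite divr_gt0.
  - by rewrite linearZ /= hCt.
  - apply: semidefZ; first by rewrite mulr_ge0 ?sqr_ge0 ?exprn_ge0 // ltW.
    by rewrite hC; exact: gram_semidef.
  - by apply: semidefZ; rewrite // mulr_ge0 ?divr_ge0 ?sqr_ge0.
have hB : selfadj_posdef B.
  apply: posdefD; [exact: scalar_posdef | by rewrite linearZ /= hAt |].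
  by apply: semidefZ hA0; apply: mulr_ge0; lra.
split => //; split => // n hn.
have -> : energy n.+1 = energy n
   + tau * ip (phi n) (tau^-1 *: (y n.+1 - y n.-1))
   - tau / 2%:R * ip (B *m (tau^-1 *: (y n.+1 - y n.-1))) (tau^-1 *: (y n.+1 - y n.-1)).
  by rewrite -(hscheme n hn); exact: (@energy2_step _ _ A _ sigma tau hAt hCt (lt0r_neq0 htau)).
have := young_posdef (phi n) (tau^-1 *: (y n.+1 - y n.-1)) hB htau.
lra.
Qed.
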